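(* Let $M=15$. For any integers $i,j\ge1$ and any $J\in\mathcal D_i$, the set $J\cap\widehat Q_i^j$ is a union of at most $M$ intervals in $\mathcal D_{i+j}$. Consequently, $\widehat Q_i^j$ consists of at most $M2^i$ intervals in $\mathcal D_{i+j}$, and $|Q_i^j|\le|\widehat Q_i^j|\le M2^{-j}$.
   Context: $\mathbb T=\mathbb R/\mathbb Z\cong[0,1)$, $Tx=2x\bmod1$, $d(t,s)=\|t-s\|$ the distance on $\mathbb T$. $\mathcal D_k$ is the collection of dyadic intervals $[m/2^k,(m+1)/2^k)$, $0\le m<2^k$. For $i,j\ge1$, $Q_i^j=\{x\in\mathbb T:d(T^ix,x)\le2^{-j}\}$, and $\widehat Q_i^j$ is the union of all intervals in $\mathcal D_{i+j}$ that intersect $Q_i^j$. $|\cdot|$ denotes Lebesgue measure. *)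

From HB Require Import structures.
From mathcomp Require Import all_boot all_order all_algebra.
From mathcomp Require Import all_classical all_reals all_analysis.
Set Implicit Arguments. Unset Strict Implicit. Unset Printing Implicit Defensive.
Import Order.TTheory GRing.Theory Num.Theory.
Local Open Scope classical_set_scope.
Local Open Scope ring_scope.

Section Defs.
Variable R : realType.

Definition frac (x : R) : R := x - (Num.floor x)%:~R.

Definition Tmap (x : R) : R := frac (2 * x).

Definition dT (t s : R) : R := Num.min (frac (t - s)) (1 - frac (t - s)).

(* the circle, as [0,1) *)
Definition torus : set R := [set x | 0 <= x < 1].

Definition Q (i j : nat) : set R :=
  [set x | torus x /\ dT (iter i Tmap x) x <= (2 ^- j)].

Definition Dint (k m : nat) : set R :=
  [set x | m%:R / 2 ^+ k <= x < m.+1%:R / 2 ^+ k].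

Definition Qhat (i j : nat) : set R :=
  [set x | exists m : nat, (m < 2 ^ (i + j))%N /\
              Dint (i + j) m `&` Q i j !=set0 /\ Dint (i + j) m x].

Definition Dunion (k : nat) (s : seq nat) : set R :=
  \big[setU/set0]_(m <- s) Dint k m.

End Defs.

From Pilot Require Import Defs.
From HB Require Import structures.
From mathcomp Require Import all_boot all_order all_algebra.
From mathcomp Require Import all_classical all_reals all_analysis.
From mathcomp Require Import ring lra zify.
Set Implicit Arguments. Unset Strict Implicit. Unset Printing Implicit Defensive.
Import Order.TTheory GRing.Theory Num.Theory.
Local Open Scope classical_set_scope.
Local Open Scope ring_scope.

(* A point x lies in Q_i^j iff (2^i - 1) x is within 2^-j of an integer k.
   On an interval J of D_i the quantity (2^i - 1) x varies by less than 1, so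
   at most two values of k occur; for each k the admissible x form an interval
   of length 2^(1-j) / (2^i - 1) <= 4 * 2^-(i+j), which meets at most 5
   intervals of D_(i+j).  Hence J meets Qhat_i^j in at most 10 <= 15 intervals
   of D_(i+j); summing over the 2^i intervals J and measuring gives the rest. *)

Section Windows.
Variable R : realFieldType.

Lemma uniq_window_size (c : R) (w : nat) (s : seq nat) : uniq s ->
  {in s, forall m, c < m%:R <= c + w%:R} -> (size s <= w)%N.
Proof.
case: s => [//|m0 s] us win.
have [a a_in a_min] := ex_minnP (ex_intro (fun m => m \in m0 :: s) m0 (mem_head m0 s)).
rewrite -(size_iota a w); apply: uniq_leq_size => // m ms.
rewrite mem_iota (a_min _ ms) /= -(ltr_nat R) natrD.
have /andP[lt_ca _] := win a a_in; have /andP[_ le_mc] := win m ms.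
lra.
Qed.

Lemma uniq_window2_size (c1 c2 : R) (w : nat) (s : seq nat) : uniq s ->
  {in s, forall m, (c1 < m%:R <= c1 + w%:R) || (c2 < m%:R <= c2 + w%:R)} ->
  (size s <= w + w)%N.
Proof.
move=> us win; pose in1 m := c1 < m%:R <= c1 + w%:R.
rewrite -(count_predC in1) -!size_filter leq_add //.
  by apply: (@uniq_window_size c1); [exact: filter_uniq | move=> m; rewrite mem_filter => /andP[]].
apply: (@uniq_window_size c2); first exact: filter_uniq.
by move=> m; rewrite mem_filter => /andP[/negbTE out1 /win]; rewrite -/(in1 m) out1.
Qed.

Lemma near_int_range (E eps x k : R) (n : nat) :
  1 <= E -> 2 * eps <= 1 -> n%:R <= x * E < n%:R + 1 ->
  `|(E - 1) * x - k| <= eps ->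
  (E - 1) * n%:R / E - eps <= k < (E - 1) * n%:R / E - eps + 2.
Proof.
move=> E1 eps_le /andP[nx xn] /[!ler_norml] /andP[k_lo k_hi].
have E0 : 0 < E by lra.
have xE : (E - 1) * n%:R / E <= (E - 1) * x <= (E - 1) * n%:R / E + (E - 1) / E.
  rewrite ler_pdivrMr // -mulrDl ler_pdivlMr //; apply/andP; split; nra.
have NE : (E - 1) / E < 1 by rewrite ltr_pdivrMr //; lra.
apply/andP; split; lra.
Qed.

Lemma dyadic_index_range (E F x k : R) (m : nat) :
  2 <= E -> 0 < F -> m%:R <= x * (E * F) < m%:R + 1 ->
  `|(E - 1) * x - k| <= F^-1 ->
  (k - F^-1) * (E * F) / (E - 1) - 1 < m%:R <= (k - F^-1) * (E * F) / (E - 1) + 4.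
Proof.
move=> E2 F0 /andP[mx xm] /[!ler_norml] /andP[k_lo k_hi].
have N0 : 0 < E - 1 by lra.
have EF0 : 0 < E * F by nra.
have FF : F^-1 * (E * F) = E by rewrite mulrCA mulVf ?mulr1 ?gt_eqF.
have x_lo : (k - F^-1) * (E * F) / (E - 1) <= x * (E * F).
  by rewrite ler_pdivrMr // mulrAC ler_pM2r //; lra.
have x_hi : x * (E * F) <= (k + F^-1) * (E * F) / (E - 1).
  by rewrite ler_pdivlMr // mulrAC ler_pM2r //; lra.
have gap : (k + F^-1) * (E * F) / (E - 1) = (k - F^-1) * (E * F) / (E - 1) + 2 * E / (E - 1).
  by rewrite -mulrDl; congr (_ / _); rewrite mulrBl mulrDl FF; ring.
have gap4 : 2 * E / (E - 1) <= 4 by rewrite ler_pdivrMr //; lra.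
apply/andP; split; lra.
Qed.

End Windows.

Lemma int_window2 (R : archiFieldType) (r : R) (k : int) :
  r <= k%:~R < r + 2 -> k = Num.ceil r \/ k = Num.ceil r + 1.
Proof.
move=> /andP[r_k k_r].
have lo : Num.ceil r <= k by rewrite ceil_le_int.
have hi : k < Num.ceil r + 2.
  by rewrite -(ltr_int R) intrD; have := ceil_ge r; lra.
lia.
Qed.

Lemma two_le_expr (R : realDomainType) (k : nat) : (1 <= k)%N -> 2 <= (2 : R) ^+ k.
Proof. by case: k => // k _; rewrite exprS ler_peMr // exprn_ege1 // ler1n. Qed.

Lemma iota_mul (a b s : nat) :
  iota (s * b) (a * b) = flatten [seq iota (n * b) b | n <- iota s a].
Proof.
elim: a s => [//|a IH] s.
by rewrite mulSn iotaD -mulSnr IH.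
Qed.

Lemma ltn_block_expnD (i j n m : nat) : (n < 2 ^ i)%N ->
  (m < n * 2 ^ j + 2 ^ j)%N -> (m < 2 ^ (i + j))%N.
Proof. by move=> n_lt /leq_trans; apply; rewrite expnD -mulSnr leq_mul2r n_lt orbT. Qed.

Section DoublingMap.
Variable R : realType.

Lemma iter_TmapE (x : R) (i : nat) :
  exists z : int, iter i (@Tmap R) x = 2 ^+ i * x - z%:~R.
Proof.
elim: i => [|i [z IH]]; first by exists 0; rewrite /= mul1r subr0.
exists (2 * z + Num.floor (2 * iter i (@Tmap R) x)).
rewrite iterS /Tmap /Defs.frac IH intrD intrM exprS.
by have -> : (2%:Z)%:~R = 2 :> R by []; ring.
Qed.

Lemma dT_le_near_int (t s e : R) :
  dT t s <= e -> exists k : int, `|t - s - k%:~R| <= e.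
Proof.
have /andP[fl_le lt_fl] := floor_itv (t - s); rewrite intrD in lt_fl.
rewrite /dT /Defs.frac ge_min => /orP[near_fl | near_fl1].
  by exists (Num.floor (t - s)); rewrite ler_norml; apply/andP; split; lra.
by exists (Num.floor (t - s) + 1); rewrite ler_norml intrD; apply/andP; split; lra.
Qed.

Lemma Q_near_int (i j : nat) (x : R) : Q i j x ->
  torus x /\ exists k : int, `|(2 ^+ i - 1) * x - k%:~R| <= 2 ^- j.
Proof.
case=> x_torus /dT_le_near_int [k near_k]; split => //.
have [z z_def] := iter_TmapE x i; exists (z + k).
rewrite z_def in near_k; rewrite intrD.
by rewrite (_ : _ - _ = 2 ^+ i * x - z%:~R - x - k%:~R) //; ring.
Qed.

End DoublingMap.

Section DyadicIntervals.
Variable R : realType.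

Lemma DintE (k m : nat) (x : R) : Dint k m x <-> m%:R <= x * 2 ^+ k < m.+1%:R.
Proof.
have K0 : 0 < (2 : R) ^+ k by rewrite exprn_gt0.
by rewrite /Dint /= ler_pdivrMr // ltr_pdivlMr.
Qed.

Lemma Dint_refine (i j n m : nat) (x : R) : Dint (i + j) m x ->
  Dint i n x <-> (n * 2 ^ j <= m < n * 2 ^ j + 2 ^ j)%N.
Proof.
have F0 : 0 < (2 : R) ^+ j by rewrite exprn_gt0.
rewrite DintE exprD mulrA => /andP[m_le le_m].
rewrite DintE -(ler_pM2r F0) -(ltr_pM2r F0) -mulSnr.
split=> /andP[lo hi]; apply/andP; split.
- by rewrite -ltnS -(ltr_nat R) natrM natrX; lra.
- by rewrite -(ltr_nat R) natrM natrX; lra.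
- by move: lo; rewrite -(ler_nat R) natrM natrX; lra.
- by move: hi; rewrite -(ler_nat R) natrM natrX; lra.
Qed.

Lemma torus_Dint (k : nat) (x : R) : torus x -> exists2 m, (m < 2 ^ k)%N & Dint k m x.
Proof.
move=> /andP[x_ge0 x_lt1].
have K1 : 1 <= (2 : R) ^+ k by rewrite exprn_ege1 // ler1n.
have /andP[lo hi] := truncn_itv (mulr_ge0 x_ge0 (le_trans ler01 K1)).
exists (Num.truncn (x * 2 ^+ k)); last by apply/DintE; rewrite lo -addn1 natrD.
rewrite -(ltr_nat R) natrX; apply: le_lt_trans lo _.
by rewrite -ltr_pdivlMr ?mulfV ?gt_eqF // (lt_le_trans ltr01).
Qed.

Lemma DunionP (k : nat) (s : seq nat) (x : R) :
  Dunion k s x <-> exists2 m, m \in s & Dint k m x.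
Proof. by rewrite /Dunion -bigcup_seq. Qed.

Local Open Scope ereal_scope.

Lemma Dint_itv (k m : nat) :
  @Dint R k m = [set` `[(m%:R / 2 ^+ k)%R, (m.+1%:R / 2 ^+ k)%R[%R].
Proof. by apply/seteqP; split => x; rewrite /Dint /= in_itv. Qed.

Lemma measurable_Dint (k m : nat) : measurable (@Dint R k m).
Proof. by rewrite Dint_itv; exact: measurable_itv. Qed.

Lemma lebesgue_measure_Dint (k m : nat) :
  lebesgue_measure (@Dint R k m) = (2 ^- k)%:E.
Proof.
have K0 : (0 < (2 : R) ^+ k)%R by rewrite exprn_gt0.
rewrite Dint_itv lebesgue_measure_itv /= lte_fin ltr_pM2r ?invr_gt0 // ltr_nat ltnSn.
by rewrite -EFinD -mulrBl -natrB // subSnn mul1r.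
Qed.

Lemma lebesgue_measure_Dunion_le (k : nat) (s : seq nat) :
  lebesgue_measure (@Dunion R k s) <= ((size s)%:R * 2 ^- k)%:E.
Proof.
have measurable_Dunion t : measurable (@Dunion R k t).
  rewrite /Dunion; elim: t => [|m t IH]; rewrite ?big_nil ?big_cons //.
  exact: measurableU (measurable_Dint k m) IH.
elim: s => [|m s IH]; first by rewrite /Dunion big_nil measure0 mul0r.
have -> : @Dunion R k (m :: s) = Dint k m `|` Dunion k s by rewrite /Dunion big_cons.
apply: le_trans (measureU2 _ _ _) _; [exact: measurable_Dint | exact: measurable_Dunion |].
have Dint_le : lebesgue_measure (@Dint R k m) <= (2 ^- k)%:E by rewrite lebesgue_measure_Dint.
apply: le_trans (leeD Dint_le IH) _.
by rewrite -EFinD lee_fin /= -[(size s).+1]addn1 natrD mulrDl mul1r addrC.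
Qed.

End DyadicIntervals.

Section Qhat.
Variable R : realType.

Definition hits (i j m : nat) : bool := `[< Dint (i + j) m `&` @Q R i j !=set0 >].

Definition Qhat_index (i j : nat) : seq nat :=
  [seq m <- iota 0 (2 ^ (i + j)) | hits i j m].

Definition Qhat_block (i j n : nat) : seq nat :=
  [seq m <- iota (n * 2 ^ j) (2 ^ j) | hits i j m].

Lemma Q_sub_Qhat (i j : nat) : @Q R i j `<=` Qhat i j.
Proof.
move=> x x_Q; have [m m_lt x_m] := torus_Dint (i + j) (proj1 x_Q).
by exists m; split => //; split => //; exists x.
Qed.

Lemma Qhat_Dunion (i j : nat) : @Qhat R i j = @Dunion R (i + j) (Qhat_index i j).
Proof.
apply/seteqP; split=> x.
  move=> [m [m_lt [m_hits x_m]]]; apply/DunionP; exists m => //.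
  by rewrite mem_filter mem_iota /= m_lt andbT; apply/asboolP.
case/DunionP=> m; rewrite mem_filter mem_iota /= => /andP[/asboolP m_hits m_lt] x_m.
by exists m.
Qed.

Lemma Dint_Qhat_Dunion (i j n : nat) : (n < 2 ^ i)%N ->
  Dint i n `&` @Qhat R i j = @Dunion R (i + j) (Qhat_block i j n).
Proof.
move=> n_lt; rewrite Qhat_Dunion; apply/seteqP; split=> x.
  move=> [x_n /DunionP[m]]; rewrite mem_filter => /andP[m_hits _] x_m.
  apply/DunionP; exists m => //; rewrite mem_filter m_hits mem_iota /=.
  exact: (Dint_refine n x_m).1.
case/DunionP=> m; rewrite mem_filter mem_iota => /andP[m_hits m_block] x_m.
split; first exact: (Dint_refine n x_m).2.
apply/DunionP; exists m => //; rewrite mem_filter m_hits mem_iota /=.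
by case/andP: m_block => _; apply: ltn_block_expnD.
Qed.

Lemma Qhat_index_flatten (i j : nat) :
  Qhat_index i j = flatten [seq Qhat_block i j n | n <- iota 0 (2 ^ i)].
Proof. by rewrite /Qhat_index expnD -(mul0n (2 ^ j)%N) iota_mul filter_flatten -map_comp. Qed.

Lemma size_Qhat_block (i j n : nat) : (1 <= i)%N -> (1 <= j)%N ->
  (size (Qhat_block i j n) <= 10)%N.
Proof.
move=> i_ge1 j_ge1.
set E := (2 : R) ^+ i; set F := (2 : R) ^+ j.
have E2 : 2 <= E by exact: two_le_expr.
have F2 : 2 <= F by exact: two_le_expr.
have F0 : 0 < F by lra.
have eps_le : 2 * F^-1 <= 1.
  have : F^-1 * F = 1 by rewrite mulVf ?gt_eqF.
  have : 0 < F^-1 by rewrite invr_gt0.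
  nra.
pose r := (E - 1) * n%:R / E - F^-1.
(* ]c k, c k + 5] contains every index m whose interval meets
   [(k - 2^-j) / (2^i - 1), (k + 2^-j) / (2^i - 1)], and by [near_int_range]
   only k = ceil r and k = ceil r + 1 can occur on the block of n. *)
pose c (k : int) := (k%:~R - F^-1) * (E * F) / (E - 1) - 1.
apply: (@uniq_window2_size R (c (Num.ceil r)) (c (Num.ceil r + 1)) 5).
  exact/filter_uniq/iota_uniq.
move=> m; rewrite mem_filter mem_iota => /andP[/asboolP[x [x_m x_Q]] m_block].
have x_n := (Dint_refine n x_m).2 m_block.
have [_ [k near_k]] := Q_near_int x_Q; rewrite -/E -/F in near_k.
have m_win : c k < m%:R <= c k + 5%:R.
  have /DintE := x_m; rewrite exprD -/E -/F -addn1 natrD => /dyadic_index_range.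
  by move=> /(_ k%:~R E2 F0 near_k) /andP[lo hi]; rewrite /c; apply/andP; split; lra.
have k_win : r <= k%:~R < r + 2.
  have /DintE := x_n; rewrite -/E -addn1 natrD => /near_int_range.
  by apply; rewrite // ?ler1n //; lra.
by case: (int_window2 k_win) => <-; rewrite m_win ?orbT.
Qed.

Lemma size_Qhat_index (i j : nat) : (1 <= i)%N -> (1 <= j)%N ->
  (size (Qhat_index i j) <= 10 * 2 ^ i)%N.
Proof.
move=> i_ge1 j_ge1; rewrite Qhat_index_flatten.
rewrite -[X in (_ <= _ * X)%N](size_iota 0 (2 ^ i)).
elim: (iota 0 (2 ^ i)) => [//|n ns IH] /=.
by rewrite size_cat mulnS leq_add // size_Qhat_block.
Qed.

Lemma lebesgue_measure_Qhat_le (i j : nat) : (1 <= i)%N -> (1 <= j)%N ->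
  (lebesgue_measure (@Qhat R i j) <= (10%:R * 2 ^- j)%:E)%E.
Proof.
move=> i_ge1 j_ge1; rewrite Qhat_Dunion.
apply: le_trans (lebesgue_measure_Dunion_le R _ _) _.
rewrite lee_fin exprD invfM mulrA ler_pM2r ?invr_gt0 ?exprn_gt0 //.
by rewrite ler_pdivrMr ?exprn_gt0 // -natrX -natrM ler_nat size_Qhat_index.
Qed.

End Qhat.

Theorem lemma4p2 (R : realType) :
  let M := 15%N in
  (forall (i j : nat), (1 <= i)%N -> (1 <= j)%N ->
     forall n : nat, (n < 2 ^ i)%N ->
       exists s : seq nat, (size s <= M)%N /\ all (fun m => m < 2 ^ (i + j))%N s /\
         @Dint R i n `&` @Qhat R i j = @Dunion R (i + j) s)
  /\
  (forall (i j : nat), (1 <= i)%N -> (1 <= j)%N ->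
     (exists s : seq nat, (size s <= M * 2 ^ i)%N /\ all (fun m => m < 2 ^ (i + j))%N s /\
         @Qhat R i j = @Dunion R (i + j) s)
     /\ ((@lebesgue_measure R) (@Q R i j) <= (@lebesgue_measure R) (@Qhat R i j))%E
     /\ ((@lebesgue_measure R) (@Qhat R i j) <= (M%:R * 2 ^- j)%:E)%E).
Proof.
move=> M; split=> [i j i_ge1 j_ge1 n n_lt | i j i_ge1 j_ge1].
  exists (Qhat_block R i j n); split; first exact: leq_trans (size_Qhat_block R n i_ge1 j_ge1) _.
  split; last exact: Dint_Qhat_Dunion.
  apply/allP=> m; rewrite mem_filter mem_iota => /and3P[_ _].
  exact: ltn_block_expnD.
split; first exists (Qhat_index R i j).
  split; first by apply: leq_trans (size_Qhat_index R i_ge1 j_ge1) _; rewrite leq_mul2r orbT.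
  by split; [apply/allP=> m; rewrite mem_filter mem_iota => /and3P[] | exact: Qhat_Dunion].
split; first exact/le_outer_measure/Q_sub_Qhat.
apply: le_trans (lebesgue_measure_Qhat_le R i_ge1 j_ge1) _.
by rewrite lee_fin ler_wpM2r ?invr_ge0 ?exprn_ge0 // ler_nat.
Qed.
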